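(* Let $I$ be an ideal of a multiplicative Lie algebra $G$. Then: (1) if $I\cap[G,G]=1$, then $Z(G/I)=Z(G)/I$; (2) if $I\cap(G\star G)=1$, then $LZ(G/I)=LZ(G)/I$; (3) if $I\cap{}^M[G,G]=1$, then $\mathcal Z(G/I)=\mathcal Z(G)/I$.
   Context: A multiplicative Lie algebra is a group $(G,\cdot)$ with a binary operation $\star$ such that for all $x,y,z\in G$: $x\star x=1$; $x\star(yz)=(x\star y)\,{}^y(x\star z)$; $(xy)\star z={}^x(y\star z)(x\star z)$; $((x\star y)\star{}^yz)((y\star z)\star{}^zx)((z\star x)\star{}^xy)=1$; ${}^z(x\star y)={}^zx\star{}^zy$, where ${}^xy=xyx^{-1}$. An ideal is a normal subgroup $I$ with $x\star y\in I$ for all $x\in G$, $y\in I$; $G/I$ carries the induced structure. $Z(G)$ is the group center, $LZ(G)=\{x\in G: x\star y=1\ \forall y\in G\}$ the Lie center, $\mathcal Z(G)=LZ(G)\cap Z(G)$; $[G,G]$ is the commutator subgroup, $G\star G$ the ideal generated by all $a\star b$, and ${}^M[G,G]=(G\star G)[G,G]$. *)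

Record MLA := {
  carrier :> Type;
  mul : carrier -> carrier -> carrier;
  one : carrier;
  inv : carrier -> carrier;
  star : carrier -> carrier -> carrier;
  mulA : forall x y z, mul x (mul y z) = mul (mul x y) z;
  mul1x : forall x, mul one x = x;
  mulx1 : forall x, mul x one = x;
  mulVx : forall x, mul (inv x) x = one;
  mulxV : forall x, mul x (inv x) = one;
  (* multiplicative Lie algebra axioms, with ^x y = x y x^-1 *)
  star_xx : forall x, star x x = one;
  star_xM : forall x y z,
      star x (mul y z) = mul (star x y) (mul (mul y (star x z)) (inv y));
  star_Mx : forall x y z,
      star (mul x y) z = mul (mul (mul x (star y z)) (inv x)) (star x z);
  star_jacobi : forall x y z,
      mul (mul (star (star x y) (mul (mul y z) (inv y)))
               (star (star y z) (mul (mul z x) (inv z))))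
          (star (star z x) (mul (mul x y) (inv x))) = one;
  star_conj : forall x y z,
      mul (mul z (star x y)) (inv z)
      = star (mul (mul z x) (inv z)) (mul (mul z y) (inv z))
}.

Arguments mul {m}. Arguments one {m}. Arguments inv {m}. Arguments star {m}.

Section Defs.
Variable G : MLA.

Definition conjg (x y : G) : G := mul (mul x y) (inv x).
Definition commg (x y : G) : G := mul (mul x y) (mul (inv x) (inv y)).

Definition center (x : G) : Prop := forall y : G, mul x y = mul y x.
Definition lie_center (x : G) : Prop := forall y : G, star x y = one.
Definition mcenter (x : G) : Prop := lie_center x /\ center x.

Definition subgroup (S : G -> Prop) : Prop :=
  S one /\ (forall x y, S x -> S y -> S (mul x y)) /\ (forall x, S x -> S (inv x)).
Definition normal (S : G -> Prop) : Prop :=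
  subgroup S /\ (forall x y, S y -> S (conjg x y)).
Definition ideal (S : G -> Prop) : Prop :=
  normal S /\ (forall x y, S y -> S (star x y)).

Definition comm_subgroup (z : G) : Prop :=
  forall S, subgroup S -> (forall x y, S (commg x y)) -> S z.
Definition star_ideal (z : G) : Prop :=
  forall S, ideal S -> (forall x y, S (star x y)) -> S z.
Definition Mcomm (z : G) : Prop :=
  exists a b, star_ideal a /\ comm_subgroup b /\ z = mul a b.

Definition trivial_meet (A B : G -> Prop) : Prop :=
  forall x, A x -> B x -> x = one.
End Defs.
Arguments center {G} x. Arguments ideal {G} S. Arguments subgroup {G} S. Arguments normal {G} S. Arguments trivial_meet {G} A B. Arguments conjg {G} x y. Arguments commg {G} x y. Arguments lie_center {G} x. Arguments mcenter {G} x.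

Definition mla_hom (G H : MLA) (f : G -> H) : Prop :=
  (forall x y, f (mul x y) = mul (f x) (f y)) /\
  (forall x y, f (star x y) = star (f x) (f y)).
Arguments mla_hom {G H} f.

(* (Q, pi) is a presentation of the quotient G/I: pi is a surjective MLA
   homomorphism with kernel exactly I (so Q ≅ G/I with the induced structure,
   and pi corresponds to the canonical projection). *)
Definition is_quotient (G : MLA) (I : G -> Prop) (Q : MLA) (pi : G -> Q) : Prop :=
  mla_hom pi /\ (forall q : Q, exists x, pi x = q) /\
  (forall x, pi x = one <-> I x).
Arguments is_quotient {G} I {Q} pi.

Definition qimage (G Q : MLA) (pi : G -> Q) (A : G -> Prop) (q : Q) : Prop :=
  exists x, A x /\ pi x = q.
Arguments qimage {G Q} pi A q.

From Stdlib Require Import Setoid.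

(* The image of x in G/I is central iff every commutator [x, y] lies in I, and
   Lie central iff every x ⋆ y lies in I.  If I meets a set
   containing all commutators (resp. star products) only in 1, these elements
   are then trivial, so x is already (Lie) central in G; conversely, (Lie)
   centrality passes to surjective images.  Part (3) combines both arguments,
   as ^M[G,G] contains [G,G] and G ⋆ G. *)

Section GroupFacts.
Variable G : MLA.

Lemma mul_eq1_inv (a b : G) : mul a b = one -> a = inv b.
Proof.
  intro E. rewrite <- (mulx1 G a), <- (mulxV G b), (mulA G), E, (mul1x G).
  reflexivity.
Qed.

Lemma commg_eq1 (x y : G) : commg x y = one <-> mul x y = mul y x.
Proof.
  assert (yx_inv : mul (mul y x) (mul (inv x) (inv y)) = one).
  { rewrite (mulA G), <- (mulA G y x (inv x)), (mulxV G), (mulx1 G), (mulxV G).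
    reflexivity. }
  unfold commg. split; intro E.
  - rewrite (mul_eq1_inv _ _ E), (mul_eq1_inv _ _ yx_inv). reflexivity.
  - rewrite E. exact yx_inv.
Qed.

Lemma comm_subgroup_commg (x y : G) : comm_subgroup G (commg x y).
Proof. intros S _ HS. apply HS. Qed.

Lemma star_ideal_star (x y : G) : star_ideal G (star x y).
Proof. intros S _ HS. apply HS. Qed.

Lemma Mcomm_commg (x y : G) : Mcomm G (commg x y).
Proof.
  exists one, (commg x y). split; [|split].
  - intros S [[[S1 _] _] _] _. exact S1.
  - apply comm_subgroup_commg.
  - symmetry. apply mul1x.
Qed.

Lemma Mcomm_star (x y : G) : Mcomm G (star x y).
Proof.
  exists (star x y), one. split; [|split].
  - apply star_ideal_star.
  - intros S [S1 _] _. exact S1.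
  - symmetry. apply mulx1.
Qed.
End GroupFacts.

Section Homomorphism.
Context {G H : MLA} {f : G -> H}.
Hypothesis hf : mla_hom f.

Lemma hom_mul (x y : G) : f (mul x y) = mul (f x) (f y).
Proof. apply (proj1 hf). Qed.

Lemma hom_star (x y : G) : f (star x y) = star (f x) (f y).
Proof. apply (proj2 hf). Qed.

Lemma hom_one : f one = one.
Proof.
  transitivity (mul (f one) (mul (f one) (inv (f one)))).
  - rewrite (mulxV H), (mulx1 H). reflexivity.
  - rewrite (mulA H), <- hom_mul, (mul1x G), (mulxV H). reflexivity.
Qed.

Lemma hom_inv (x : G) : f (inv x) = inv (f x).
Proof. apply mul_eq1_inv. rewrite <- hom_mul, (mulVx G). exact hom_one. Qed.

Lemma hom_commg (x y : G) : f (commg x y) = commg (f x) (f y).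
Proof. unfold commg. rewrite !hom_mul, !hom_inv. reflexivity. Qed.
End Homomorphism.

Lemma qimage_iff {G Q : MLA} {f : G -> Q} {P : G -> Prop} {R : Q -> Prop} :
  (forall q, exists x, f x = q) -> (forall x, R (f x) <-> P x) ->
  forall q, R q <-> qimage f P q.
Proof.
  intros f_surj RP q. destruct (f_surj q) as [x <-]. split.
  - intro Rx. exists x. split; [apply RP; exact Rx | reflexivity].
  - intros [y [Py <-]]. apply RP. exact Py.
Qed.

Section Quotient.
Context {G : MLA} {I : G -> Prop} {Q : MLA} {pi : G -> Q}.
Hypothesis hq : is_quotient I pi.

Let pi_hom : mla_hom pi := proj1 hq.

Lemma quotient_surj (q : Q) : exists x, pi x = q.
Proof. apply (proj1 (proj2 hq)). Qed.

Lemma quotient_ker (x : G) : pi x = one -> I x.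
Proof. apply (proj2 (proj2 hq)). Qed.

Lemma center_quotient {A : G -> Prop} :
  trivial_meet I A -> (forall x y, A (commg x y)) ->
  forall x, center (pi x) <-> center x.
Proof.
  intros meet A_commg x. split.
  - intros C y. apply commg_eq1, meet; [|apply A_commg].
    apply quotient_ker. rewrite (hom_commg pi_hom). apply commg_eq1, C.
  - intros C q. destruct (quotient_surj q) as [y <-].
    rewrite <- !(hom_mul pi_hom), C. reflexivity.
Qed.

Lemma lie_center_quotient {A : G -> Prop} :
  trivial_meet I A -> (forall x y, A (star x y)) ->
  forall x, lie_center (pi x) <-> lie_center x.
Proof.
  intros meet A_star x. split.
  - intros L y. apply meet; [|apply A_star].
    apply quotient_ker. rewrite (hom_star pi_hom). apply L.
  - intros L q. destruct (quotient_surj q) as [y <-].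
    rewrite <- (hom_star pi_hom), L. apply (hom_one pi_hom).
Qed.
End Quotient.

Theorem lemma3p1 (G : MLA) (I : G -> Prop) (hI : ideal I) :
  (trivial_meet I (comm_subgroup G) ->
     forall (Q : MLA) (pi : G -> Q), is_quotient I pi ->
       forall q : Q, center q <-> qimage pi center q) /\
  (trivial_meet I (star_ideal G) ->
     forall (Q : MLA) (pi : G -> Q), is_quotient I pi ->
       forall q : Q, lie_center q <-> qimage pi lie_center q) /\
  (trivial_meet I (Mcomm G) ->
     forall (Q : MLA) (pi : G -> Q), is_quotient I pi ->
       forall q : Q, mcenter q <-> qimage pi mcenter q).
Proof.
  split; [|split]; intros meet Q pi hq;
    apply (qimage_iff (quotient_surj hq)); intro x.
  - exact (center_quotient hq meet (comm_subgroup_commg G) x).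
  - exact (lie_center_quotient hq meet (star_ideal_star G) x).
  - unfold mcenter.
    rewrite (lie_center_quotient hq meet (Mcomm_star G) x),
            (center_quotient hq meet (Mcomm_commg G) x).
    reflexivity.
Qed.
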